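(* Let $D\subseteq\mathbb{R}$ and let $f,g:D\to\mathbb{R}$ be ordinal decreasing. Let $h=f+g$. Then $h$ is ordinal decreasing and $o(h)\le o(f)\otimes o(g)$.
   Context: For $u:D\to\mathbb{R}$, a strictly decreasing sequence $x_1>x_2>\cdots$ in $D$ is $u$-bad if $u(x_1)>u(x_2)>\cdots$; $u$ is ordinal decreasing if there is no infinite $u$-bad sequence. For ordinal decreasing $u$, the tree $T_u$ has a vertex for each finite $u$-bad sequence (the empty sequence being the root), the parent of $\langle x_1>\cdots>x_n\rangle$ being $\langle x_1>\cdots>x_{n-1}\rangle$; each vertex gets ordinal height $o(v)=\sup_{w\text{ child of }v}(o(w)+1)$ and $o(u)$ is the height of the root. The natural product: if $\alpha=\omega^{\alpha_1}+\cdots+\omega^{\alpha_n}$ and $\beta=\omega^{\beta_1}+\cdots+\omega^{\beta_m}$ in Cantor normal form, then $\alpha\otimes\beta=\bigoplus_{i\le n,\,j\le m}\omega^{\alpha_i\oplus\beta_j}$, where $\oplus$ is the natural sum (write both ordinals in Cantor normal form and merge the exponents in nonincreasing order). *)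

From Stdlib Require Import Reals List Sorting.Sorted Permutation ClassicalEpsilon.
Open Scope R_scope.

(* [Node Ia f] denotes the ordinal sup_{i : I} (f i + 1), i.e. exactly the
   height of a (well-founded) tree whose root has children of heights f i. *)
Inductive Ord : Type := Node (I : Type) (f : I -> Ord).

Fixpoint ole (a b : Ord) {struct a} : Prop :=
  match a, b with
  | Node Ia f, Node Ja g => forall i : Ia, exists j : Ja, ole (f i) (g j)
  end.

Definition oeq (a b : Ord) : Prop := ole a b /\ ole b a.

Definition ozero : Ord := Node False (fun x => False_rect Ord x).

Fixpoint oadd (a b : Ord) {struct b} : Ord :=
  match b with
  | Node Ja g =>
      match a with
      | Node Ia f =>
          Node (Ia + Ja)%type
            (fun k => match k with inl i => f i | inr j => oadd a (g j) end)
      end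
  end.

Fixpoint omuln (a : Ord) (n : nat) : Ord :=
  match n with O => ozero | S m => oadd (omuln a m) a end.

(* omega ^ a *)
Fixpoint oexp (a : Ord) : Ord :=
  match a with
  | Node Ia f =>
      Node (option (Ia * nat))
        (fun k => match k with
                  | None => ozero
                  | Some (i, n) => omuln (oexp (f i)) n
                  end)
  end.

Fixpoint cnf_val (l : list Ord) : Ord :=
  match l with nil => ozero | x :: l' => oadd (oexp x) (cnf_val l') end.

Definition is_cnf (l : list Ord) (alpha : Ord) : Prop :=
  Sorted (fun x y => ole y x) l /\ oeq alpha (cnf_val l).

Definition natsum (alpha beta gamma : Ord) : Prop :=
  exists la lb lc, is_cnf la alpha /\ is_cnf lb beta /\ is_cnf lc gamma /\
    Permutation (la ++ lb) lc.

(* natural product: gamma = (+)_{i,j} omega^(alpha_i (+) beta_j) *)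
Definition natprod (alpha beta gamma : Ord) : Prop :=
  exists la lb lab lc, is_cnf la alpha /\ is_cnf lb beta /\ is_cnf lc gamma /\
    Forall2 (fun p c => natsum (fst p) (snd p) c) (list_prod la lb) lab /\
    Permutation lab lc.

Fixpoint dec_chain (u : R -> R) (l : list R) : Prop :=
  match l with
  | x :: ((y :: _) as l') => y < x /\ u y < u x /\ dec_chain u l'
  | _ => True
  end.

Definition bad (D : R -> Prop) (u : R -> R) (l : list R) : Prop :=
  Forall D l /\ dec_chain u l.

Definition ordinal_decreasing (D : R -> Prop) (u : R -> R) : Prop :=
  ~ exists s : nat -> R, forall n,
      D (s n) /\ s (S n) < s n /\ u (s (S n)) < u (s n).

(* height_of D u v alpha : the vertex v of T_u has ordinal height alpha,
   where the children of v are the bad sequences v ++ [x]. *)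
Inductive height_of (D : R -> Prop) (u : R -> R) (v : list R) : Ord -> Prop :=
  | height_node (h : {x : R | bad D u (v ++ x :: nil)} -> Ord) :
      (forall x, height_of D u (v ++ proj1_sig x :: nil) (h x)) ->
      height_of D u v (Node {x : R | bad D u (v ++ x :: nil)} h).

Definition o (D : R -> Prop) (u : R -> R) : Ord :=
  epsilon (inhabits ozero) (fun alpha => height_of D u nil alpha).

(* Rank a point x of D by the heights p x and q x of the vertex <x> in T_f and
   T_g.  If y < x and h y < h x then f or g decreases, so p or q drops: the
   h-bad pairs form a transitive relation along which one of two ordinal
   coordinates, bounded by o(f) and o(g), always decreases.  Such a relation
   has height at most o(f) (x) o(g).  With o(f) = w^a_1 + ... and
   o(g) = w^b_1 + ... in Cantor normal form, D splits into the cells where p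
   and q lie in the blocks of size w^a_i and w^b_j.  A cell has height at most
   w^(a_i (+) b_j), by induction on (a_i, b_j): below a point of the cell, the
   points where p (or q) drops lie in finitely many smaller cells, and
   w^(a_i (+) b_j) is closed under natural sums.  Heights of a union are
   bounded by natural sums.  Finally a ranking of D below gamma bounds the
   heights of T_h by gamma and rules out infinite h-bad sequences. *)

From Stdlib Require Import Reals List Sorting.Sorted Permutation ClassicalEpsilon Classical
  Relations Lia Lra Wf_nat.

(** * Tree ordinals *)

Definition olt (a b : Ord) : Prop :=
  match b with Node _ g => exists j, ole a (g j) end.

Lemma ole_Node I f b : ole (Node I f) b <-> forall i, olt (f i) b.
Proof. destruct b; simpl; tauto. Qed.

Lemma ole_refl a : ole a a.
Proof. induction a as [I f IH]; simpl; intro i; exists i; apply IH. Qed.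

Lemma olt_Node I f i : olt (f i) (Node I f).
Proof. exists i. apply ole_refl. Qed.

Lemma ole_trans a b c : ole a b -> ole b c -> ole a c.
Proof.
  revert b c; induction a as [I f IH]; intros [J g] [K h] Hab Hbc i.
  destruct (Hab i) as [j Hj], (Hbc j) as [k Hk]. exists k. eauto.
Qed.

Lemma olt_le_trans a b c : olt a b -> ole b c -> olt a c.
Proof.
  destruct b as [J g], c as [K h]; intros [j Hj] Hbc.
  destruct (Hbc j) as [k Hk]. exists k. eapply ole_trans; eauto.
Qed.

Lemma ole_lt_trans a b c : ole a b -> olt b c -> olt a c.
Proof.
  destruct c as [K h]; intros Hab [k Hk]. exists k. eapply ole_trans; eauto.
Qed.

Lemma olt_le_incl a b : olt a b -> ole a b.
Proof.
  revert b; induction a as [I f IH]; intros [J g] [j Hj].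
  apply ole_Node; intro i. exists j. apply IH.
  destruct (g j) as [K h]. destruct (Hj i) as [k Hk]. exists k. exact Hk.
Qed.

Lemma olt_trans a b c : olt a b -> olt b c -> olt a c.
Proof. intros Hab Hbc. eapply olt_le_trans; eauto using olt_le_incl. Qed.

Lemma olt_wf : well_founded olt.
Proof.
  assert (H : forall b a, ole a b -> Acc olt a).
  { induction b as [J g IH]; intros a Hab. constructor; intros y Hy.
    destruct (olt_le_trans _ _ _ Hy Hab) as [j Hj]. eapply IH; eauto. }
  intro a. apply (H a), ole_refl.
Qed.

Lemma olt_ind (P : Ord -> Prop) :
  (forall a, (forall b, olt b a -> P b) -> P a) -> forall a, P a.
Proof. exact (well_founded_ind olt_wf P). Qed.

Lemma olt_irrefl a : ~ olt a a.
Proof. induction a as [a IH] using olt_ind. intro H. exact (IH a H H). Qed.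

Lemma ole_lt_contra a b : ole a b -> olt b a -> False.
Proof. intros Hab Hba. apply (olt_irrefl b). eapply olt_le_trans; eauto. Qed.

Lemma ole_or_gt a b : ole a b \/ olt b a.
Proof.
  revert b; induction a as [I f IH]; intro b.
  destruct (classic (forall i, olt (f i) b)) as [H | H].
  - left. apply ole_Node, H.
  - right. apply not_all_ex_not in H as [i Hi].
    exists i. destruct b as [J g]. apply ole_Node; intro j.
    destruct (IH i (g j)) as [H | H]; [exfalso; apply Hi; exists j |]; exact H.
Qed.

Lemma ozero_le a : ole ozero a.
Proof. destruct a; intros []. Qed.

Lemma olt_ozero a : ~ olt a ozero.
Proof. intros [[] _]. Qed.

Lemma olt_least_exists (P : Ord -> Prop) :
  (exists a, P a) -> exists a, P a /\ forall b, olt b a -> ~ P b.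
Proof.
  intros [a0 Ha0]. apply NNPP; intro Hnone.
  assert (HP : forall a, ~ P a).
  { induction a as [a IH] using olt_ind. intro Ha. apply Hnone. exists a. auto. }
  exact (HP a0 Ha0).
Qed.

Lemma oadd_Node I f J g : oadd (Node I f) (Node J g) =
  Node (I + J) (fun k => match k with inl i => f i | inr j => oadd (Node I f) (g j) end).
Proof. reflexivity. Qed.

Lemma oadd_le_l a b : ole a (oadd a b).
Proof.
  destruct a as [I f], b as [J g]. rewrite oadd_Node. intro i.
  exists (inl i). apply ole_refl.
Qed.

Lemma oadd_le_r a b : ole b (oadd a b).
Proof.
  revert a; induction b as [J g IH]; intros [I f]. rewrite oadd_Node. intro j.
  exists (inr j). apply IH.
Qed.

Lemma oadd_mono_r a b b' : ole b b' -> ole (oadd a b) (oadd a b').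
Proof.
  revert b'; induction b as [J g IH]; intros [J' g'] H; destruct a as [I f].
  rewrite !oadd_Node. intros [i | j].
  - exists (inl i). apply ole_refl.
  - destruct (H j) as [j' Hj']. exists (inr j'). apply IH, Hj'.
Qed.

Lemma oadd_mono_l a a' b : ole a a' -> ole (oadd a b) (oadd a' b).
Proof.
  revert a a'; induction b as [J g IH]; intros [I f] [I' f'] H.
  rewrite !oadd_Node. intros [i | j].
  - destruct (H i) as [i' Hi']. exists (inl i'). exact Hi'.
  - exists (inr j). apply IH, H.
Qed.

Lemma oadd_mono a a' b b' : ole a a' -> ole b b' -> ole (oadd a b) (oadd a' b').
Proof. intros. eapply ole_trans; [apply oadd_mono_l | apply oadd_mono_r]; eauto. Qed.

Lemma oadd_lt_mono_r a b b' : olt b b' -> olt (oadd a b) (oadd a b').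
Proof.
  destruct b' as [J' g'], a as [I f]. intros [j' Hj']. rewrite oadd_Node.
  exists (inr j'). apply oadd_mono_r, Hj'.
Qed.

Lemma oadd_ozero_r a : ole (oadd a ozero) a.
Proof.
  destruct a as [I f]. unfold ozero. rewrite oadd_Node. intros [i | []].
  exists i. apply ole_refl.
Qed.

Lemma oadd_ozero_l b : ole (oadd ozero b) b.
Proof.
  induction b as [J g IH]. unfold ozero. rewrite oadd_Node. intros [[] | j].
  exists j. apply IH.
Qed.

Lemma oadd_le_ozero a b : ole b ozero -> ole (oadd a b) a.
Proof. intro H. eapply ole_trans; [apply oadd_mono_r, H | apply oadd_ozero_r]. Qed.

Lemma oadd_le_intro a b c :
  (forall x, olt x a -> olt x c) -> (forall b', olt b' b -> olt (oadd a b') c) ->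
  ole (oadd a b) c.
Proof.
  destruct a as [I f], b as [J g]. intros Ha Hb. rewrite oadd_Node. apply ole_Node.
  intros [i | j]; [apply Ha | apply Hb]; apply olt_Node.
Qed.

Lemma olt_oadd_inv x a b : olt x (oadd a b) ->
  olt x a \/ exists b', olt b' b /\ ole x (oadd a b').
Proof.
  destruct a as [I f], b as [J g]. rewrite oadd_Node. intros [[i | j] H].
  - left. exists i. exact H.
  - right. exists (g j). split; [apply olt_Node | exact H].
Qed.

Lemma oadd_assoc_le a b c : ole (oadd (oadd a b) c) (oadd a (oadd b c)).
Proof.
  revert a b; induction c as [K h IH]; intros a b. apply oadd_le_intro.
  - intros x Hx. apply olt_oadd_inv in Hx as [Hx | [b' [Hb' Hx]]].
    + eapply olt_le_trans; [exact Hx | apply oadd_le_l].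
    + eapply ole_lt_trans; [exact Hx |]. apply oadd_lt_mono_r.
      eapply olt_le_trans; [exact Hb' | apply oadd_le_l].
  - intros c' [k Hk].
    eapply ole_lt_trans; [apply oadd_mono_r, Hk |].
    eapply ole_lt_trans; [apply IH |]. apply oadd_lt_mono_r.
    destruct b. rewrite oadd_Node. exists (inr k). apply ole_refl.
Qed.

Lemma oadd_assoc_ge a b c : ole (oadd a (oadd b c)) (oadd (oadd a b) c).
Proof.
  revert a b; induction c as [K h IH]; intros a b. apply oadd_le_intro.
  - intros x Hx. eapply olt_le_trans; [exact Hx |].
    eapply ole_trans; apply oadd_le_l.
  - intros b' Hb'. apply olt_oadd_inv in Hb' as [Hb' | [c' [Hc' Hb']]].
    + eapply olt_le_trans; [apply oadd_lt_mono_r, Hb' | apply oadd_le_l].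
    + destruct Hc' as [k Hk].
      eapply ole_lt_trans; [apply oadd_mono_r, Hb' |].
      eapply ole_lt_trans; [apply oadd_mono_r, oadd_mono_r, Hk |].
      eapply ole_lt_trans; [apply IH |]. apply oadd_lt_mono_r, olt_Node.
Qed.

(* The [b] with [a + b = c] has a child [b_j] with [a + b_j = g j] for each child
   [g j] of [c] above [a]. *)
Lemma oadd_sub a c : ole a c -> exists b, oeq (oadd a b) c.
Proof.
  revert a; induction c as [J g IH]; intros a Hac.
  pose (b := fun j : {j : J | ole a (g j)} =>
         epsilon (inhabits ozero) (fun b => oeq (oadd a b) (g (proj1_sig j)))).
  assert (Hb : forall j, oeq (oadd a (b j)) (g (proj1_sig j))).
  { intros [j Hj]. apply epsilon_spec, IH, Hj. }
  exists (Node _ b). split.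
  - apply oadd_le_intro.
    + intros x Hx. eapply olt_le_trans; eauto.
    + intros b' [j Hb'].
      eapply ole_lt_trans; [apply oadd_mono_r, Hb' |].
      eapply ole_lt_trans; [apply (proj1 (Hb j)) | apply olt_Node].
  - apply ole_Node; intro j. destruct (ole_or_gt a (g j)) as [H | H].
    + eapply ole_lt_trans; [apply (proj2 (Hb (exist _ j H))) |].
      apply oadd_lt_mono_r, (olt_Node _ b (exist _ j H)).
    + eapply olt_le_trans; [exact H | apply oadd_le_l].
Qed.

Lemma omuln_mono_n a m n : (m <= n)%nat -> ole (omuln a m) (omuln a n).
Proof.
  induction 1; [apply ole_refl |].
  eapply ole_trans; [exact IHle | apply oadd_le_l].
Qed.

Lemma omuln_mono a a' n : ole a a' -> ole (omuln a n) (omuln a' n).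
Proof. intro H. induction n; [apply ole_refl | apply oadd_mono; auto]. Qed.

Lemma omuln_1_le a : ole (omuln a 1) a.
Proof. apply oadd_ozero_l. Qed.

Lemma omuln_1_ge a : ole a (omuln a 1).
Proof. apply oadd_le_r. Qed.

Lemma oexp_pos e : olt ozero (oexp e).
Proof. destruct e. exists None. apply ole_refl. Qed.

Lemma omuln_oexp_lt_S e n : olt (omuln (oexp e) n) (omuln (oexp e) (S n)).
Proof.
  eapply ole_lt_trans; [apply (oadd_le_l _ ozero) |].
  apply oadd_lt_mono_r, oexp_pos.
Qed.

Lemma oexp_mono e e' : ole e e' -> ole (oexp e) (oexp e').
Proof.
  revert e'; induction e as [I f IH]; intros [J g] H. intros [[i n] |].
  - destruct (H i) as [j Hj]. exists (Some (j, n)). apply omuln_mono, IH, Hj.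
  - exists None. apply ole_refl.
Qed.

Lemma omuln_oexp_lt e e' n : olt e e' -> olt (omuln (oexp e) n) (oexp e').
Proof.
  destruct e' as [J g]. intros [j Hj]. exists (Some (j, n)).
  apply omuln_mono, oexp_mono, Hj.
Qed.

Lemma oexp_lt_mono e e' : olt e e' -> olt (oexp e) (oexp e').
Proof.
  intro H. eapply ole_lt_trans; [apply omuln_1_ge | apply omuln_oexp_lt, H].
Qed.

Lemma ole_oexp a : ole a (oexp a).
Proof.
  induction a as [I f IH]. apply ole_Node; intro i.
  exists (Some (i, 1%nat)). eapply ole_trans; [apply IH | apply omuln_1_ge].
Qed.

Lemma olt_oexp_inv x e : olt x (oexp e) ->
  ole x ozero \/ exists e' n, olt e' e /\ ole x (omuln (oexp e') n).
Proof.
  destruct e as [I f]. intros [[[i n] |] H].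
  - right. exists (f i), n. split; [apply olt_Node | exact H].
  - left. exact H.
Qed.

Lemma olt_omuln_oadd_inv e m t x : olt x (oadd (omuln (oexp e) m) t) ->
  (exists t', olt t' t /\ ole x (oadd (omuln (oexp e) m) t')) \/
  (exists m' w, (m' < m)%nat /\ olt w (oexp e) /\ ole x (oadd (omuln (oexp e) m') w)).
Proof.
  intro H. apply olt_oadd_inv in H as [H | H]; [right | left; exact H].
  induction m as [| m IH]; [exfalso; exact (olt_ozero _ H) |].
  apply olt_oadd_inv in H as [H | [w [Hw H]]].
  - destruct (IH H) as [m' [w [Hm' Hw]]]. exists m', w. split; [lia | exact Hw].
  - exists m, w. auto.
Qed.

(** * Natural sums and Cantor normal forms *)

(* Hessenberg's natural sum by its recursive characterisation: the least
   ordinal above every [nsum a' b] and [nsum a b'] with [a' < a], [b' < b]. *)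
Fixpoint nsum (a : Ord) : Ord -> Ord :=
  match a with
  | Node Ia f => fix nsum_a (b : Ord) : Ord :=
      match b with
      | Node Ja g => Node (Ia + Ja) (fun k => match k with
                                          | inl i => nsum (f i) (Node Ja g)
                                          | inr j => nsum_a (g j) end)
      end
  end.

Lemma nsum_Node I f J g : nsum (Node I f) (Node J g) =
  Node (I + J) (fun k => match k with inl i => nsum (f i) (Node J g)
                                  | inr j => nsum (Node I f) (g j) end).
Proof. reflexivity. Qed.

Lemma nsum_le_intro a b c :
  (forall a', olt a' a -> olt (nsum a' b) c) -> (forall b', olt b' b -> olt (nsum a b') c) ->
  ole (nsum a b) c.
Proof.
  destruct a as [I f], b as [J g]. intros Ha Hb. rewrite nsum_Node. apply ole_Node.
  intros [i | j]; [apply Ha | apply Hb]; apply olt_Node.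
Qed.

Lemma nsum_mono a a' b b' : ole a a' -> ole b b' -> ole (nsum a b) (nsum a' b').
Proof.
  revert a' b b'; induction a as [I f IHa]; intros a' b; revert a';
    induction b as [J g IHb]; intros [I' f'] [J' g'] Ha Hb.
  rewrite !nsum_Node. intros [i | j].
  - destruct (Ha i) as [i' Hi']. exists (inl i'). apply IHa; auto.
  - destruct (Hb j) as [j' Hj']. exists (inr j'). apply IHb; auto.
Qed.

Lemma nsum_lt_l a a' b b' : olt a a' -> ole b b' -> olt (nsum a b) (nsum a' b').
Proof.
  destruct a' as [I' f'], b' as [J' g']. intros [i' Hi'] Hb. rewrite nsum_Node.
  exists (inl i'). apply nsum_mono; auto.
Qed.

Lemma nsum_lt_r a a' b b' : ole a a' -> olt b b' -> olt (nsum a b) (nsum a' b').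
Proof.
  destruct a' as [I' f'], b' as [J' g']. intros Ha [j' Hj']. rewrite nsum_Node.
  exists (inr j'). apply nsum_mono; auto.
Qed.

Lemma nsum_lt_mono_l a a' b : olt a a' -> olt (nsum a b) (nsum a' b).
Proof. intro H. apply nsum_lt_l; [exact H | apply ole_refl]. Qed.

Lemma nsum_lt_mono_r a b b' : olt b b' -> olt (nsum a b) (nsum a b').
Proof. intro H. apply nsum_lt_r; [apply ole_refl | exact H]. Qed.

Lemma nsum_le_l a b : ole a (nsum a b).
Proof.
  revert b; induction a as [I f IH]; intros [J g]. rewrite nsum_Node. intro i.
  exists (inl i). apply IH.
Qed.

Lemma nsum_comm a b : ole (nsum a b) (nsum b a).
Proof.
  revert b; induction a as [I f IHa]; intro b; induction b as [J g IHb].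
  rewrite !nsum_Node. intros [i | j].
  - exists (inr i). apply IHa.
  - exists (inl j). apply IHb.
Qed.

Lemma olt_nsum_inv x a b : olt x (nsum a b) ->
  (exists a', olt a' a /\ ole x (nsum a' b)) \/ (exists b', olt b' b /\ ole x (nsum a b')).
Proof.
  destruct a as [I f], b as [J g]. rewrite nsum_Node. intros [[i | j] H].
  - left. exists (f i). split; [apply olt_Node | exact H].
  - right. exists (g j). split; [apply olt_Node | exact H].
Qed.

Lemma nsum_assoc_le a b c : ole (nsum (nsum a b) c) (nsum a (nsum b c)).
Proof.
  revert b c; induction a as [a IHa] using olt_ind; intro b;
    induction b as [b IHb] using olt_ind; intro c; induction c as [c IHc] using olt_ind.
  apply nsum_le_intro.
  - intros x Hx. apply olt_nsum_inv in Hx as [[a' [Ha' Hx]] | [b' [Hb' Hx]]];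
      eapply ole_lt_trans; try apply (nsum_mono _ _ c c Hx (ole_refl c)).
    + eapply ole_lt_trans; [apply IHa, Ha' | apply nsum_lt_mono_l, Ha'].
    + eapply ole_lt_trans; [apply IHb, Hb' |].
      apply nsum_lt_mono_r, nsum_lt_mono_l, Hb'.
  - intros c' Hc'. eapply ole_lt_trans; [apply IHc, Hc' |].
    apply nsum_lt_mono_r, nsum_lt_mono_r, Hc'.
Qed.

Lemma nsum_assoc_ge a b c : ole (nsum a (nsum b c)) (nsum (nsum a b) c).
Proof.
  eapply ole_trans; [apply nsum_comm |].
  eapply ole_trans; [apply nsum_assoc_le |].
  eapply ole_trans; [apply nsum_comm |].
  eapply ole_trans; [apply nsum_assoc_le | apply nsum_comm].
Qed.

Lemma nsum_ozero_r a : ole (nsum a ozero) a.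
Proof.
  induction a as [a IH] using olt_ind. apply nsum_le_intro.
  - intros a' Ha'. eapply ole_lt_trans; [apply IH, Ha' | exact Ha'].
  - intros b' Hb'. exfalso. exact (olt_ozero _ Hb').
Qed.

Lemma nsum_ozero_l a : ole (nsum ozero a) a.
Proof. eapply ole_trans; [apply nsum_comm | apply nsum_ozero_r]. Qed.

Lemma oadd_le_nsum a b : ole (oadd a b) (nsum a b).
Proof.
  revert a; induction b as [b IH] using olt_ind; intro a. apply oadd_le_intro.
  - intros x Hx. eapply olt_le_trans; [exact Hx | apply nsum_le_l].
  - intros b' Hb'. eapply ole_lt_trans; [apply IH, Hb' | apply nsum_lt_mono_r, Hb'].
Qed.

(* Stated under the hypothesis that [oexp e] is closed under [nsum], which
   [nsum_lt_oexp] then proves by induction on [e]. *)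
Section NsumBelowOexp.

Variable e : Ord.
Hypothesis nsum_closed :
  forall a b, olt a (oexp e) -> olt b (oexp e) -> olt (nsum a b) (oexp e).

Let W n := omuln (oexp e) n.

Lemma nsum_omuln_oexp_le m t n s : olt t (oexp e) -> olt s (oexp e) ->
  ole (nsum (oadd (W m) t) (oadd (W n) s)) (oadd (W (m + n)) (nsum t s)).
Proof.
  revert t n s; induction m as [m IHm] using (well_founded_induction lt_wf).
  intro t; induction t as [t IHt] using olt_ind.
  intro n; induction n as [n IHn] using (well_founded_induction lt_wf).
  intro s; induction s as [s IHs] using olt_ind.
  intros Ht Hs. apply nsum_le_intro.
  - intros x Hx. apply olt_omuln_oadd_inv in Hx as [[t' [Ht' Hx]] | [m' [w [Hm' [Hw Hx]]]]];
      eapply ole_lt_trans; try apply (nsum_mono _ _ _ _ Hx (ole_refl _)).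
    + eapply ole_lt_trans; [apply IHt; eauto using olt_trans |].
      apply oadd_lt_mono_r, nsum_lt_mono_l, Ht'.
    + eapply ole_lt_trans; [apply IHm; auto |].
      eapply olt_le_trans; [apply oadd_lt_mono_r, nsum_closed, Hs; exact Hw |].
      eapply ole_trans; [| apply oadd_le_l]. apply (omuln_mono_n _ (S (m' + n))). lia.
  - intros y Hy. apply olt_omuln_oadd_inv in Hy as [[s' [Hs' Hy]] | [n' [w [Hn' [Hw Hy]]]]];
      eapply ole_lt_trans; try apply (nsum_mono _ _ _ _ (ole_refl _) Hy).
    + eapply ole_lt_trans; [apply IHs; eauto using olt_trans |].
      apply oadd_lt_mono_r, nsum_lt_mono_r, Hs'.
    + eapply ole_lt_trans; [apply IHn; auto |].
      eapply olt_le_trans; [apply oadd_lt_mono_r, nsum_closed, Hw; exact Ht |].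
      eapply ole_trans; [| apply oadd_le_l]. apply (omuln_mono_n _ (S (m + n'))). lia.
Qed.

End NsumBelowOexp.

Theorem nsum_lt_oexp c a b : olt a (oexp c) -> olt b (oexp c) -> olt (nsum a b) (oexp c).
Proof.
  revert a b; induction c as [c IH] using olt_ind; intros a b Ha Hb.
  destruct (olt_oexp_inv _ _ Ha) as [Ha0 | [e1 [m [He1 Ha1]]]].
  { eapply ole_lt_trans; [apply nsum_mono; [exact Ha0 | apply ole_refl] |].
    eapply ole_lt_trans; [apply nsum_ozero_l | exact Hb]. }
  destruct (olt_oexp_inv _ _ Hb) as [Hb0 | [e2 [n [He2 Hb1]]]].
  { eapply ole_lt_trans; [apply nsum_mono; [apply ole_refl | exact Hb0] |].
    eapply ole_lt_trans; [apply nsum_ozero_r | exact Ha]. }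
  assert (exists e, olt e c /\ ole e1 e /\ ole e2 e) as [e [He [H1 H2]]].
  { destruct (ole_or_gt e1 e2) as [H | H].
    - exists e2. auto using ole_refl.
    - exists e1. auto using ole_refl, olt_le_incl. }
  assert (Hup : forall a' e' k, ole a' (omuln (oexp e') k) -> ole e' e ->
            ole a' (oadd (omuln (oexp e) k) ozero)).
  { intros a' e' k Ha' He'. eapply ole_trans; [exact Ha' |].
    eapply ole_trans; [apply omuln_mono, oexp_mono, He' | apply oadd_le_l]. }
  eapply ole_lt_trans; [apply nsum_mono; [apply (Hup _ _ _ Ha1 H1) | apply (Hup _ _ _ Hb1 H2)] |].
  eapply ole_lt_trans; [apply (nsum_omuln_oexp_le e (IH e He)); apply oexp_pos |].
  eapply ole_lt_trans; [apply oadd_le_ozero, nsum_ozero_r | apply omuln_oexp_lt, He].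
Qed.

Lemma nsum_oexp_le_oadd c w : olt w (oexp c) -> ole (nsum (oexp c) w) (oadd (oexp c) w).
Proof.
  intro Hw.
  eapply ole_trans; [| eapply ole_trans;
    [apply (nsum_omuln_oexp_le c (nsum_lt_oexp c) 1 ozero 0 w (oexp_pos c) Hw) |]].
  - apply nsum_mono; [| apply oadd_le_r].
    eapply ole_trans; [apply omuln_1_ge | apply oadd_le_l].
  - apply oadd_mono; [apply omuln_1_le | apply nsum_ozero_l].
Qed.

Lemma nsum_oadd_oexp_le c u z : ole u (oexp c) ->
  ole (nsum u (oadd (oexp c) z)) (oadd (oexp c) (nsum u z)).
Proof.
  revert z; induction u as [u IHu] using olt_ind; intro z;
    induction z as [z IHz] using olt_ind; intros Hu.
  apply nsum_le_intro.
  - intros u' Hu'. eapply ole_lt_trans; [apply IHu; eauto using olt_le_incl, olt_le_trans |].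
    apply oadd_lt_mono_r, nsum_lt_mono_l, Hu'.
  - intros y Hy. apply olt_oadd_inv in Hy as [Hy | [z' [Hz' Hy]]].
    + destruct (ole_or_gt (oexp c) u) as [Hcu | Hcu].
      * eapply ole_lt_trans; [apply nsum_mono; [exact Hu | apply ole_refl] |].
        eapply ole_lt_trans; [apply nsum_oexp_le_oadd, Hy |].
        eapply olt_le_trans; [apply oadd_lt_mono_r, Hy |].
        apply oadd_mono_r. eapply ole_trans; [exact Hcu | apply nsum_le_l].
      * eapply olt_le_trans; [apply nsum_lt_oexp; eauto | apply oadd_le_l].
    + eapply ole_lt_trans; [apply nsum_mono; [apply ole_refl | exact Hy] |].
      eapply ole_lt_trans; [apply IHz, Hu; exact Hz' |].
      apply oadd_lt_mono_r, nsum_lt_mono_r, Hz'.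
Qed.

Definition oge (a b : Ord) : Prop := ole b a.

Lemma oge_trans : transitive Ord oge.
Proof. intros a b c Hab Hbc. eapply ole_trans; eauto. Qed.

Definition nsum_exps (l : list Ord) : Ord :=
  fold_right (fun c acc => nsum (oexp c) acc) ozero l.

Lemma nsum_exps_app l1 l2 :
  ole (nsum (nsum_exps l1) (nsum_exps l2)) (nsum_exps (l1 ++ l2)).
Proof.
  induction l1 as [| c l1 IH]; cbn [nsum_exps fold_right app]; [apply nsum_ozero_l |].
  eapply ole_trans; [apply nsum_assoc_le | apply nsum_mono; [apply ole_refl | exact IH]].
Qed.

Lemma nsum_exps_perm l l' : Permutation l l' -> ole (nsum_exps l) (nsum_exps l').
Proof.
  induction 1; cbn [nsum_exps fold_right].
  - apply ole_refl.
  - apply nsum_mono; [apply ole_refl | assumption].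
  - eapply ole_trans; [apply nsum_assoc_ge |]. eapply ole_trans; [| apply nsum_assoc_le].
    apply nsum_mono; [apply nsum_comm | apply ole_refl].
  - eapply ole_trans; eauto.
Qed.

Lemma nsum_exps_mono l l' : Forall2 ole l l' -> ole (nsum_exps l) (nsum_exps l').
Proof.
  induction 1; cbn [nsum_exps fold_right]; [apply ole_refl |].
  apply nsum_mono; [apply oexp_mono |]; assumption.
Qed.

Lemma cnf_val_le_nsum_exps l : ole (cnf_val l) (nsum_exps l).
Proof.
  induction l as [| c l IH]; cbn [nsum_exps fold_right cnf_val]; [apply ole_refl |].
  eapply ole_trans; [apply oadd_le_nsum | apply nsum_mono; [apply ole_refl | exact IH]].
Qed.

Lemma oexp_le_cnf_val l d : In d l -> ole (oexp d) (cnf_val l).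
Proof.
  induction l as [| d' l IH]; cbn [cnf_val]; [intros [] | intros [<- | H]].
  - apply oadd_le_l.
  - eapply ole_trans; [apply IH, H | apply oadd_le_r].
Qed.

Lemma cnf_val_lt_oexp c l : Forall (fun d => olt d c) l -> olt (cnf_val l) (oexp c).
Proof.
  induction 1 as [| d l Hd _ IH]; cbn [cnf_val]; [apply oexp_pos |].
  eapply ole_lt_trans; [apply oadd_le_nsum | apply nsum_lt_oexp; auto using oexp_lt_mono].
Qed.

Lemma nsum_oexp_cnf_val_le c l : StronglySorted oge l -> Forall (fun d => ole d c) l ->
  ole (nsum (oexp c) (cnf_val l)) (oadd (oexp c) (cnf_val l)).
Proof.
  revert c; induction l as [| d l IH]; intros c Hl Hc; cbn [cnf_val].
  { eapply ole_trans; [apply nsum_ozero_r | apply oadd_le_l]. }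
  apply StronglySorted_inv in Hl as [Hl Hld]. apply Forall_inv in Hc.
  destruct (ole_or_gt c d) as [Hcd | Hdc].
  - assert (Hedc : ole (oexp d) (oexp c)) by now apply oexp_mono.
    assert (Hecd : ole (oexp c) (oexp d)) by now apply oexp_mono.
    eapply ole_trans; [apply nsum_mono; [apply ole_refl | apply oadd_mono_l, Hedc] |].
    eapply ole_trans; [apply nsum_oadd_oexp_le, ole_refl |].
    eapply ole_trans; [apply oadd_mono_r, IH; [exact Hl |] | apply oadd_mono_r, oadd_mono_l, Hecd].
    eapply Forall_impl; [| exact Hld]. intros a Ha. eapply ole_trans; eauto.
  - apply nsum_oexp_le_oadd, cnf_val_lt_oexp with (l := d :: l). constructor; [exact Hdc |].
    eapply Forall_impl; [| exact Hld]. intros a Ha. eapply ole_lt_trans; eauto.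
Qed.

Lemma nsum_exps_le_cnf_val l : StronglySorted oge l -> ole (nsum_exps l) (cnf_val l).
Proof.
  induction 1 as [| c l Hl IH Hc]; cbn [nsum_exps fold_right cnf_val]; [apply ole_refl |].
  eapply ole_trans; [apply nsum_mono; [apply ole_refl | exact IH] |].
  apply nsum_oexp_cnf_val_le; assumption.
Qed.

Lemma oadd_absorb_omuln a x m : ole (oadd a x) x -> ole (oadd (omuln a m) x) x.
Proof.
  intro H. induction m as [| m IH]; [apply oadd_ozero_l |].
  eapply ole_trans; [apply oadd_assoc_le |].
  eapply ole_trans; [apply oadd_mono_r, H | exact IH].
Qed.

(* Peel off [omega^e] with [e] the largest exponent such that [omega^e <= a];
   the remainder is smaller than [a], since otherwise [a] would absorb every
   [omega^e * m]. *)
Theorem cnf_exists a : exists l, StronglySorted oge l /\ oeq a (cnf_val l).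
Proof.
  induction a as [a IH] using olt_ind.
  destruct (ole_or_gt a ozero) as [Ha0 | Hpos].
  { exists nil. split; [constructor | split; [exact Ha0 | apply ozero_le]]. }
  destruct (olt_least_exists (fun e => olt a (oexp e))) as [e0 [Hae0 Hmin]].
  { exists (Node unit (fun _ => a)). exists (Some (tt, 1%nat)).
    eapply ole_trans; [apply ole_oexp | apply omuln_1_ge]. }
  destruct (olt_oexp_inv _ _ Hae0) as [H | [e [n [He Han]]]].
  { exfalso. eapply ole_lt_contra; eauto. }
  assert (Hea : ole (oexp e) a).
  { destruct (ole_or_gt (oexp e) a) as [H | H]; [exact H | exfalso; exact (Hmin e He H)]. }
  destruct (oadd_sub _ _ Hea) as [b [Hb1 Hb2]].
  assert (Hba : olt b a).
  { destruct (ole_or_gt a b) as [Hab | Hba]; [exfalso | exact Hba].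
    assert (Habs : ole (oadd (oexp e) a) a).
    { eapply ole_trans; [apply oadd_mono_r, Hab | exact Hb1]. }
    eapply ole_lt_contra; [| apply (omuln_oexp_lt_S e n)].
    eapply ole_trans; [apply oadd_le_l | eapply ole_trans; [| exact Han]].
    apply oadd_absorb_omuln, Habs. }
  destruct (IH b Hba) as [l [Hl [Hbl Hlb]]].
  exists (e :: l). split; [constructor; [exact Hl |] | cbn [cnf_val]].
  - apply Forall_forall. intros d Hd. destruct (ole_or_gt d e) as [H | H]; [exact H | exfalso].
    eapply ole_lt_contra; [| apply (omuln_oexp_lt e d n H)].
    eapply ole_trans; [apply oexp_le_cnf_val, Hd |].
    eapply ole_trans; [exact Hlb | eapply ole_trans; [apply olt_le_incl, Hba | exact Han]].
  - split; eapply ole_trans; try (apply oadd_mono_r; eassumption); assumption.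
Qed.

Lemma sorted_insert_exists l x : StronglySorted oge l ->
  exists l', Permutation (x :: l) l' /\ StronglySorted oge l'.
Proof.
  induction l as [| y l IH]; intros Hl.
  { exists (x :: nil). split; repeat constructor. }
  apply StronglySorted_inv in Hl as [Hl Hy].
  destruct (ole_or_gt y x) as [Hyx | Hxy].
  - exists (x :: y :: l). split; [reflexivity |]. repeat constructor; auto.
    eapply Forall_impl; [| exact Hy]. intros a Ha. eapply oge_trans; eauto.
  - destruct (IH Hl) as [l' [Hp Hs]]. exists (y :: l'). split.
    + rewrite perm_swap. constructor. exact Hp.
    + constructor; [exact Hs |]. apply Forall_forall. intros a Ha.
      apply (Permutation_in _ (Permutation_sym Hp)) in Ha as [<- | Ha].
      * apply olt_le_incl, Hxy.
      * rewrite Forall_forall in Hy. auto.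
Qed.

Lemma sorted_perm_exists l : exists l', Permutation l l' /\ StronglySorted oge l'.
Proof.
  induction l as [| x l [l' [Hp Hs]]]; [exists nil; split; constructor |].
  destruct (sorted_insert_exists l' x Hs) as [l'' [Hp' Hs']].
  exists l''. split; [rewrite Hp; exact Hp' | exact Hs'].
Qed.

Lemma natsum_exists a b : exists c, natsum a b c /\ ole (nsum a b) c.
Proof.
  destruct (cnf_exists a) as [la [Hla [Ha Ha']]], (cnf_exists b) as [lb [Hlb [Hb Hb']]].
  destruct (sorted_perm_exists (la ++ lb)) as [lc [Hp Hlc]].
  exists (cnf_val lc). split.
  - exists la, lb, lc. repeat split; auto using StronglySorted_Sorted, ole_refl.
  - assert (Hab : ole (nsum a b) (nsum (nsum_exps la) (nsum_exps lb))).
    { apply nsum_mono; (eapply ole_trans; [eassumption | apply cnf_val_le_nsum_exps]). }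
    eapply ole_trans; [exact Hab | eapply ole_trans; [apply nsum_exps_app |]].
    eapply ole_trans; [apply nsum_exps_perm, Hp | apply nsum_exps_le_cnf_val, Hlc].
Qed.

Definition nsum_pairs (L : list (Ord * Ord)) : list Ord :=
  map (fun pr => nsum (fst pr) (snd pr)) L.

Lemma nsum_pairs_list_prod_cons a la lb :
  nsum_pairs (list_prod (a :: la) lb) = map (nsum a) lb ++ nsum_pairs (list_prod la lb).
Proof. unfold nsum_pairs. simpl. rewrite map_app, map_map. reflexivity. Qed.

Lemma natsum_list_exists (L : list (Ord * Ord)) : exists lc,
  Forall2 (fun p c => natsum (fst p) (snd p) c) L lc /\
  Forall2 ole (nsum_pairs L) lc.
Proof.
  induction L as [| [a b] L [lc [H1 H2]]]; [exists nil; split; constructor |].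
  destruct (natsum_exists a b) as [c [Hc1 Hc2]].
  exists (c :: lc). split; constructor; auto.
Qed.

(** * Rankings *)

Definition in_block (s a v : Ord) : Prop := ole s v /\ olt v (oadd s a).

Lemma in_block_ozero s v : ~ in_block s ozero v.
Proof.
  intros [Hsv Hv]. eapply ole_lt_contra; [exact Hsv |].
  eapply olt_le_trans; [exact Hv | apply oadd_ozero_r].
Qed.

Lemma in_block_oadd_split s a b v :
  in_block s (oadd a b) v -> in_block s a v \/ in_block (oadd s a) b v.
Proof.
  intros [Hsv Hv]. destruct (ole_or_gt (oadd s a) v) as [H | H].
  - right. split; [exact H | eapply olt_le_trans; [exact Hv | apply oadd_assoc_ge]].
  - left. split; assumption.
Qed.

Lemma in_block_oexp_inv s e v : in_block s (oexp e) v ->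
  ole v s \/ exists e' n, olt e' e /\ olt v (oadd s (omuln (oexp e') n)).
Proof.
  intros [Hsv Hv]. apply olt_oadd_inv in Hv as [Hv | [b [Hb Hv]]].
  { exfalso. eapply ole_lt_contra; eauto. }
  destruct (olt_oexp_inv _ _ Hb) as [H | [e' [n [He' Hn]]]].
  - left. eapply ole_trans; [exact Hv | apply oadd_le_ozero, H].
  - right. exists e', (S n). split; [exact He' |].
    eapply ole_lt_trans; [exact Hv |].
    apply oadd_lt_mono_r. eapply ole_lt_trans; [exact Hn | apply omuln_oexp_lt_S].
Qed.

Fixpoint nsum_iter (a : Ord) (n : nat) : Ord :=
  match n with O => ozero | S m => nsum (nsum_iter a m) a end.

Lemma nsum_iter_lt_oexp a c n : olt a (oexp c) -> olt (nsum_iter a n) (oexp c).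
Proof. intro H. induction n; [apply oexp_pos | apply nsum_lt_oexp; assumption]. Qed.

Section Ranking.

Local Set Implicit Arguments.

Variable T : Type.
Variable lt : T -> T -> Prop.
Hypothesis lt_trans : transitive T lt.

Definition ranking (X : T -> Prop) (s : T -> Ord) : Prop :=
  forall x y, X x -> X y -> lt y x -> olt (s y) (s x).

Definition ranked_below (X : T -> Prop) (g : Ord) : Prop :=
  exists s, (forall x, X x -> olt (s x) g) /\ ranking X s.

Lemma ranked_below_sub X Y g : ranked_below X g -> (forall x, Y x -> X x) -> ranked_below Y g.
Proof. intros [s [Hg Hs]] HYX. exists s. split; unfold ranking in *; auto. Qed.

Lemma ranked_below_le X g g' : ranked_below X g -> ole g g' -> ranked_below X g'.
Proof.
  intros [s [Hg Hs]] Hgg'. exists s. split; [| exact Hs].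
  intros x Hx. eapply olt_le_trans; eauto.
Qed.

Lemma ranked_below_empty X g : (forall x, ~ X x) -> ranked_below X g.
Proof.
  intro H. exists (fun _ => ozero). split; [intros x Hx | intros x y Hx]; contradiction (H x).
Qed.

(* Extends a ranking [s] of [A] to a monotone function on all points. *)
Definition rank_sup (A : T -> Prop) (s : T -> Ord) (x : T) : Ord :=
  Node {z : T | A z /\ lt z x} (fun z => s (proj1_sig z)).

Lemma rank_sup_le A s x : ranking A s -> A x -> ole (rank_sup A s x) (s x).
Proof. intros Hs Hx. apply ole_Node. intros [z [Hz Hzx]]. apply Hs; assumption. Qed.

Lemma rank_sup_le_bound A s x g : (forall z, A z -> olt (s z) g) -> ole (rank_sup A s x) g.
Proof. intro Hg. apply ole_Node. intros [z [Hz Hzx]]. apply Hg, Hz. Qed.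

Lemma rank_sup_mono A s x y : lt y x -> ole (rank_sup A s y) (rank_sup A s x).
Proof.
  intro Hyx. apply ole_Node. intros [z [Hz Hzy]].
  exists (exist _ z (conj Hz (lt_trans Hzy Hyx))). apply ole_refl.
Qed.

Lemma rank_sup_lt A s x y : ranking A s -> A y -> lt y x ->
  olt (rank_sup A s y) (rank_sup A s x).
Proof.
  intros Hs Hy Hyx. eapply ole_lt_trans; [apply rank_sup_le; assumption |].
  exists (exist _ y (conj Hy Hyx)). apply ole_refl.
Qed.

(* Rank a point of [A] or [B] by the natural sum of its two [rank_sup]s. *)
Lemma ranked_below_union A B X a b : ranked_below A a -> ranked_below B b ->
  (forall x, X x -> A x \/ B x) -> ranked_below X (nsum a b).
Proof.
  intros [sa [Ha HsA]] [sb [Hb HsB]] HX.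
  exists (fun x => nsum (rank_sup A sa x) (rank_sup B sb x)). split.
  - intros x Hx. destruct (HX x Hx) as [H | H].
    + apply nsum_lt_l; [| apply rank_sup_le_bound, Hb].
      eapply ole_lt_trans; [apply rank_sup_le | apply Ha]; assumption.
    + apply nsum_lt_r; [apply rank_sup_le_bound, Ha |].
      eapply ole_lt_trans; [apply rank_sup_le | apply Hb]; assumption.
  - intros x y _ Hy Hyx. destruct (HX y Hy) as [H | H].
    + apply nsum_lt_l; [apply rank_sup_lt | apply rank_sup_mono]; assumption.
    + apply nsum_lt_r; [apply rank_sup_mono | apply rank_sup_lt]; assumption.
Qed.

Definition below (X : T -> Prop) (x : T) : T -> Prop := fun y => X y /\ lt y x.

Lemma ranked_below_below_lt X x y d : ranked_below (below X x) d -> X y -> lt y x ->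
  exists d', olt d' d /\ ranked_below (below X y) d'.
Proof.
  intros [s [Hd Hs]] Hy Hyx. exists (s y). split; [apply Hd; split; assumption |].
  assert (Hsub : forall z, below X y z -> below X x z).
  { intros z [Hz Hzy]. split; [exact Hz | eapply lt_trans; eauto]. }
  exists s. split; [| intros z z' Hz Hz'; apply Hs; auto].
  intros z Hz. apply Hs; [split; assumption | apply Hsub, Hz | apply Hz].
Qed.

(* Rank each point by the least bound of the points below it. *)
Lemma ranked_below_of_below X g :
  (forall x, X x -> exists d, olt d g /\ ranked_below (below X x) d) -> ranked_below X g.
Proof.
  intros Hloc.
  pose (least x d := ranked_below (below X x) d /\
                     forall d', olt d' d -> ~ ranked_below (below X x) d').
  pose (s x := epsilon (inhabits ozero) (least x)).
  assert (Hs : forall x, X x -> least x (s x)).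
  { intros x Hx. apply epsilon_spec, olt_least_exists.
    destruct (Hloc x Hx) as [d [_ Hd]]. exists d. exact Hd. }
  assert (Hmin : forall x d, X x -> ranked_below (below X x) d -> ole (s x) d).
  { intros x d Hx Hd. destruct (ole_or_gt (s x) d) as [H | H]; [exact H |].
    exfalso. exact (proj2 (Hs x Hx) d H Hd). }
  exists s. split.
  - intros x Hx. destruct (Hloc x Hx) as [d [Hdg Hd]].
    eapply ole_lt_trans; [apply Hmin |]; eassumption.
  - intros x y Hx Hy Hyx.
    destruct (ranked_below_below_lt (proj1 (Hs x Hx)) Hy Hyx) as [d [Hd Hyd]].
    eapply ole_lt_trans; [apply Hmin |]; eassumption.
Qed.

Lemma ranked_below_blocks (r : T -> Ord) (P : T -> Prop) e g :
  (forall s, ranked_below (fun y => P y /\ in_block s (oexp e) (r y)) g) ->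
  forall n s, ranked_below (fun y => P y /\ in_block s (omuln (oexp e) n) (r y)) (nsum_iter g n).
Proof.
  intros Hblock n s. induction n as [| n IH].
  - apply ranked_below_empty. intros y [_ Hy]. exact (in_block_ozero _ _ Hy).
  - eapply ranked_below_union; [exact IH | apply (Hblock (oadd s (omuln (oexp e) n))) |].
    intros y [Hy Hblk]. apply in_block_oadd_split in Hblk as [H | H]; auto.
Qed.

Lemma ranked_below_stripe (r : T -> Ord) (P : T -> Prop) (c : Ord -> Ord) e s v :
  in_block s (oexp e) v ->
  (forall e', olt e' e -> olt (c e') (c e)) ->
  (forall e', olt e' e -> forall s',
     ranked_below (fun y => P y /\ in_block s' (oexp e') (r y)) (oexp (c e'))) ->
  exists d, olt d (oexp (c e)) /\ ranked_below (fun y => P y /\ ole s (r y) /\ olt (r y) v) d.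
Proof.
  intros Hv Hc IH. destruct (in_block_oexp_inv _ _ _ Hv) as [Hvs | [e' [n [He' Hn]]]].
  - exists ozero. split; [apply oexp_pos |]. apply ranked_below_empty.
    intros y [_ [Hsy Hyv]]. eapply ole_lt_contra; [exact Hsy | eapply olt_le_trans; eauto].
  - exists (nsum_iter (oexp (c e')) n). split.
    + apply nsum_iter_lt_oexp, oexp_lt_mono, Hc, He'.
    + eapply ranked_below_sub; [apply (ranked_below_blocks r P e'), IH, He' |].
      intros y [Hy [Hsy Hyv]]. split; [exact Hy | split; [exact Hsy | eapply olt_trans; eauto]].
Qed.

End Ranking.

Section ProductRanking.

Variable T : Type.
Variable lt : T -> T -> Prop.
Hypothesis lt_trans : transitive T lt.
Variables p q : T -> Ord.
Hypothesis lt_p_or_q : forall x y, lt y x -> olt (p y) (p x) \/ olt (q y) (q x).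

(* Below a point [x] of the cell, [p] or [q] drops below its value at [x]; each
   of the two stripes splits into finitely many smaller cells. *)
Lemma ranked_below_cell e d s t X :
  (forall x, X x -> in_block s (oexp e) (p x) /\ in_block t (oexp d) (q x)) ->
  ranked_below lt X (oexp (nsum e d)).
Proof.
  revert d s t X; induction e as [e IHe] using olt_ind; intro d;
    induction d as [d IHd] using olt_ind; intros s t X HX.
  apply ranked_below_of_below; [exact lt_trans |]. intros x Hx.
  destruct (HX x Hx) as [Hpx Hqx].
  destruct (ranked_below_stripe lt_trans p (below lt X x) (fun e' => nsum e' d) e Hpx)
    as [dp [Hdp Hp]]; [intros; apply nsum_lt_mono_l; assumption | |].
  { intros e' He' s'. apply (IHe e' He' d s' t). intros y [[Hy _] Hblk].
    split; [exact Hblk | apply HX, Hy]. }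
  destruct (ranked_below_stripe lt_trans q (below lt X x) (nsum e) d Hqx)
    as [dq [Hdq Hq]]; [intros; apply nsum_lt_mono_r; assumption | |].
  { intros d' Hd' t'. apply (IHd d' Hd' s t'). intros y [[Hy _] Hblk].
    split; [apply HX, Hy | exact Hblk]. }
  exists (nsum dp dq). split; [apply nsum_lt_oexp; assumption |].
  eapply ranked_below_union; [exact lt_trans | exact Hp | exact Hq |].
  intros y [Hy Hyx]. destruct (HX y Hy) as [[Hsp _] [Htq _]].
  destruct (lt_p_or_q x y Hyx); [left | right]; repeat split; assumption.
Qed.

Lemma ranked_below_row a lb s t X :
  (forall x, X x -> in_block s (oexp a) (p x) /\ in_block t (cnf_val lb) (q x)) ->
  ranked_below lt X (nsum_exps (map (nsum a) lb)).
Proof.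
  revert t X; induction lb as [| b lb IH]; intros t X HX.
  { apply ranked_below_empty. intros x Hx. exact (in_block_ozero _ _ (proj2 (HX x Hx))). }
  eapply ranked_below_union; [exact lt_trans | | |].
  - apply (ranked_below_cell a b s t (fun x => X x /\ in_block t (oexp b) (q x))).
    intros x [Hx Hb]. split; [apply HX, Hx | exact Hb].
  - apply (IH (oadd t (oexp b)) (fun x => X x /\ in_block (oadd t (oexp b)) (cnf_val lb) (q x))).
    intros x [Hx Hb]. split; [apply HX, Hx | exact Hb].
  - intros x Hx. destruct (in_block_oadd_split _ _ _ _ (proj2 (HX x Hx))); auto.
Qed.

Lemma ranked_below_grid la lb s t X :
  (forall x, X x -> in_block s (cnf_val la) (p x) /\ in_block t (cnf_val lb) (q x)) ->
  ranked_below lt X (nsum_exps (nsum_pairs (list_prod la lb))).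
Proof.
  revert s X; induction la as [| a la IH]; intros s X HX.
  { apply ranked_below_empty. intros x Hx. exact (in_block_ozero _ _ (proj1 (HX x Hx))). }
  rewrite nsum_pairs_list_prod_cons.
  eapply ranked_below_le; [| apply nsum_exps_app].
  eapply ranked_below_union; [exact lt_trans | | |].
  - apply (ranked_below_row a lb s t (fun x => X x /\ in_block s (oexp a) (p x))).
    intros x [Hx Ha]. split; [exact Ha | apply HX, Hx].
  - apply (IH (oadd s (oexp a)) (fun x => X x /\ in_block (oadd s (oexp a)) (cnf_val la) (p x))).
    intros x [Hx Ha]. split; [exact Ha | apply HX, Hx].
  - intros x Hx. destruct (in_block_oadd_split _ _ _ _ (proj1 (HX x Hx))); auto.
Qed.

Theorem ranked_below_natprod alpha beta X :
  (forall x, X x -> olt (p x) alpha /\ olt (q x) beta) ->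
  exists gamma, natprod alpha beta gamma /\ ranked_below lt X gamma.
Proof.
  intros HX.
  destruct (cnf_exists alpha) as [la [Hla [Ha Ha']]], (cnf_exists beta) as [lb [Hlb [Hb Hb']]].
  destruct (natsum_list_exists (list_prod la lb)) as [lab [Hlab Hle]].
  destruct (sorted_perm_exists lab) as [lc [Hp Hlc]].
  exists (cnf_val lc). split.
  { exists la, lb, lab, lc. repeat split; auto using StronglySorted_Sorted, ole_refl. }
  eapply ranked_below_le.
  - apply (ranked_below_grid la lb ozero ozero). intros x Hx.
    destruct (HX x Hx) as [Hpx Hqx].
    split; (split; [apply ozero_le | eapply olt_le_trans; [eassumption |]];
            eapply ole_trans; [eassumption | apply oadd_le_r]).
  - eapply ole_trans; [apply nsum_exps_mono, Hle |].
    eapply ole_trans; [apply nsum_exps_perm, Hp | apply nsum_exps_le_cnf_val, Hlc].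
Qed.

End ProductRanking.

(** * Bad sequences and the trees T_u *)

Section BadSequences.

Variables (D : R -> Prop) (u : R -> R).

Lemma dec_chain_snoc_snoc l a b :
  dec_chain u (l ++ a :: b :: nil) <-> dec_chain u (l ++ a :: nil) /\ b < a /\ u b < u a.
Proof.
  induction l as [| x [| y l] IH]; simpl in *; [tauto | tauto |].
  rewrite IH. tauto.
Qed.

Lemma bad_snoc_snoc l a b :
  bad D u (l ++ a :: b :: nil) <-> bad D u (l ++ a :: nil) /\ D b /\ b < a /\ u b < u a.
Proof.
  unfold bad. rewrite dec_chain_snoc_snoc, !Forall_app, !Forall_cons_iff. tauto.
Qed.

Lemma bad_snoc_last l a : bad D u (l ++ a :: nil) -> D a.
Proof. intros [H _]. apply Forall_app in H as [_ H]. inversion H. assumption. Qed.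

End BadSequences.

Section Heights.

Variables (D : R -> Prop) (u : R -> R).

Lemma height_of_mono w b v a : height_of D u w b -> height_of D u v a ->
  (forall z, bad D u (w ++ z :: nil) -> bad D u (v ++ z :: nil)) -> ole b a.
Proof.
  intros Hw; revert v a; induction Hw as [w h Hh IH]; intros v a Hv Hsub.
  destruct Hv as [h' Hh']. apply ole_Node. intros [z Hz].
  exists (exist _ z (Hsub z Hz)). apply (IH (exist _ z Hz) _ _ (Hh' _)).
  intros z' Hz'. simpl in *. rewrite <- app_assoc in *.
  apply bad_snoc_snoc in Hz' as (_ & HDz' & Hlt & Hu). apply bad_snoc_snoc. auto.
Qed.

Lemma height_of_child v a y : height_of D u v a -> bad D u (v ++ y :: nil) ->
  exists b, height_of D u (v ++ y :: nil) b /\ olt b a.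
Proof.
  intros [h Hh] Hy. exists (h (exist _ y Hy)). split; [apply (Hh (exist _ y Hy)) | apply olt_Node].
Qed.

Hypothesis u_od : ordinal_decreasing D u.

Let child w v := exists x, w = v ++ x :: nil /\ bad D u w.

(* An inaccessible vertex has an inaccessible child; iterating this choice
   yields an infinite [u]-bad sequence. *)
Lemma child_acc v : Acc child v.
Proof.
  apply NNPP; intro Hv0.
  pose (next v := epsilon (inhabits 0)
                    (fun x => bad D u (v ++ x :: nil) /\ ~ Acc child (v ++ x :: nil))).
  assert (Hnext : forall v, ~ Acc child v ->
            bad D u (v ++ next v :: nil) /\ ~ Acc child (v ++ next v :: nil)).
  { intros w Hw. apply epsilon_spec. apply NNPP; intro H. apply Hw.
    constructor. intros w' [x [-> Hx]]. apply NNPP; intro Hw'. apply H. exists x. auto. }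
  pose (path := fix path n := match n with O => v | S m => path m ++ next (path m) :: nil end).
  assert (Hpath : forall n, ~ Acc child (path n)) by (induction n; simpl; auto; apply Hnext, IHn).
  apply u_od. exists (fun n => next (path n)). intro n.
  pose proof (proj1 (Hnext _ (Hpath (S n)))) as H. simpl in H.
  rewrite <- app_assoc in H. apply bad_snoc_snoc in H as (H & _ & Hlt & Hu).
  split; [eapply bad_snoc_last; exact H | split; assumption].
Qed.

Lemma height_of_exists v : exists a, height_of D u v a.
Proof.
  induction (child_acc v) as [v _ IH].
  pose (h (x : {x | bad D u (v ++ x :: nil)}) :=
         epsilon (inhabits ozero) (height_of D u (v ++ proj1_sig x :: nil))).
  exists (Node _ h). constructor. intros [x Hx]. apply epsilon_spec, IH. exists x. auto.
Qed.

Lemma o_spec : height_of D u nil (o D u).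
Proof. unfold o. apply epsilon_spec, height_of_exists. Qed.

Definition rk (x : R) : Ord := epsilon (inhabits ozero) (height_of D u (x :: nil)).

Lemma rk_spec x : height_of D u (x :: nil) (rk x).
Proof. unfold rk. apply epsilon_spec, height_of_exists. Qed.

Lemma rk_lt x y : D x -> D y -> y < x -> u y < u x -> olt (rk y) (rk x).
Proof.
  intros Hx Hy Hyx Hu.
  assert (Hxy : bad D u ((x :: nil) ++ y :: nil)).
  { apply (bad_snoc_snoc D u nil). repeat split; repeat constructor; simpl; auto. }
  destruct (height_of_child _ _ y (rk_spec x) Hxy) as [b [Hb Hbx]].
  eapply ole_lt_trans; [eapply height_of_mono; [apply rk_spec | exact Hb |] | exact Hbx].
  intros z Hz. simpl. apply (bad_snoc_snoc D u (x :: nil)). apply (bad_snoc_snoc D u nil) in Hz.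
  simpl in Hz. tauto.
Qed.

Lemma rk_lt_o x : D x -> olt (rk x) (o D u).
Proof.
  intro Hx.
  destruct (height_of_child _ _ x o_spec) as [b [Hb Hbo]]; [split; repeat constructor; auto |].
  eapply ole_lt_trans; [eapply height_of_mono; [apply rk_spec | exact Hb | auto] | exact Hbo].
Qed.

End Heights.

Definition bad_step (D : R -> Prop) (u : R -> R) (y x : R) : Prop :=
  D y /\ D x /\ y < x /\ u y < u x.

Lemma bad_step_trans D u : transitive R (bad_step D u).
Proof. intros x y z (? & ? & ? & ?) (? & ? & ? & ?). repeat split; auto; lra. Qed.

Section RankedTree.

Variables (D : R -> Prop) (u : R -> R) (g : Ord) (s : R -> Ord).
Hypothesis s_bound : forall x, D x -> olt (s x) g.
Hypothesis s_ranking : ranking (bad_step D u) D s.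

Lemma ordinal_decreasing_of_ranking : ordinal_decreasing D u.
Proof.
  intros [x Hx].
  assert (Hdesc : forall n, olt (s (x (S n))) (s (x n))).
  { intro n. destruct (Hx n) as (HDn & Hlt & Hu), (Hx (S n)) as (HDSn & _).
    apply s_ranking; repeat split; assumption. }
  assert (H : forall a n, s (x n) <> a).
  { induction a as [a IH] using olt_ind. intros n <-. exact (IH _ (Hdesc n) (S n) eq_refl). }
  exact (H _ 0%nat eq_refl).
Qed.

Lemma height_of_snoc_le v a : height_of D u v a ->
  forall l x, v = l ++ x :: nil -> ole a (s x).
Proof.
  induction 1 as [v h Hh IH]. intros l x ->. apply ole_Node. intros [z Hz].
  eapply ole_lt_trans; [apply (IH (exist _ z Hz) (l ++ x :: nil) z eq_refl) |].
  simpl. rewrite <- app_assoc in Hz. apply bad_snoc_snoc in Hz as (Hx & Hz & Hzx & Hu).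
  apply s_ranking; repeat split; try assumption; exact (bad_snoc_last D u l x Hx).
Qed.

Lemma o_le_of_ranking : ole (o D u) g.
Proof.
  destruct (o_spec D u ordinal_decreasing_of_ranking) as [h Hh].
  apply ole_Node. intros [z Hz].
  eapply ole_lt_trans; [apply (height_of_snoc_le _ _ (Hh (exist _ z Hz)) nil z eq_refl) |].
  apply s_bound. apply (bad_snoc_last D u nil), Hz.
Qed.

End RankedTree.

Theorem lemma11 (D : R -> Prop) (f g : R -> R) :
  ordinal_decreasing D f -> ordinal_decreasing D g ->
  ordinal_decreasing D (fun x => f x + g x) /\
  exists gamma, natprod (o D f) (o D g) gamma /\
    ole (o D (fun x => f x + g x)) gamma.
Proof.
  intros Hf Hg. set (h := fun x => f x + g x).
  assert (Hfg : forall x y, bad_step D h y x ->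
            olt (rk D f y) (rk D f x) \/ olt (rk D g y) (rk D g x)).
  { intros x y (Hy & Hx & Hyx & Hh). unfold h in Hh.
    destruct (Rlt_or_le (f y) (f x)); [left | right]; apply rk_lt; auto; lra. }
  destruct (ranked_below_natprod _ _ (bad_step_trans D h) _ _ Hfg (o D f) (o D g) D)
    as [gamma [Hprod [s [Hbound Hs]]]].
  { intros x Hx. split; apply rk_lt_o; assumption. }
  split; [exact (ordinal_decreasing_of_ranking _ _ _ Hs) |].
  exists gamma. split; [exact Hprod | exact (o_le_of_ranking _ _ _ _ Hbound Hs)].
Qed.
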